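(* Suppose $f(\cdot;0,1)$ satisfies Condition C3 and that for every $\mu\in\mathbb{R}$, $$\int_{\mathbb{R}}\{\log f(x;\mu,1)\}\,f(x;0,1)\,dx>-\infty.$$ Then for every $\Psi_0\in\boldsymbol{\Psi}_m$ and every $\sigma_0>0$, $\int_{\mathbb{R}}|\log g(x;\Psi_0,\sigma_0)|\,g(x;\Psi_0,\sigma_0)\,dx<\infty$ (i.e. Condition C2 holds).
   Context: Fix a positive integer $m$. Let $f(x;0,1)$ be a probability density on $\mathbb{R}$, $f(x;\mu,\sigma)=\sigma^{-1}f((x-\mu)/\sigma;0,1)$, $\boldsymbol{\Psi}_m=\{\sum_{j=1}^m\alpha_j I(\mu_j\le\mu):\alpha_j\ge0,\sum_j\alpha_j=1,\mu_j\in\mathbb{R}\}$, $g(x;\Psi,\sigma)=\sum_{j=1}^m\alpha_j f(x;\mu_j,\sigma)$. (C3) There exist $v_0,v_1>0$ and $\beta>1$ such that $f(x;0,1)\le\min\{v_0,v_1|x|^{-\beta}\}$ for all $x$. *)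

From mathcomp Require Import all_boot all_order all_algebra.
From mathcomp Require Import all_classical all_reals all_analysis.
Set Implicit Arguments. Unset Strict Implicit. Unset Printing Implicit Defensive.
Import Order.TTheory GRing.Theory Num.Theory.
Local Open Scope ring_scope.
Local Open Scope ereal_scope.

Definition elog {R : realType} (x : R) : \bar R :=
  if (0 < x)%R then (ln x)%:E else -oo.

Definition fls {R : realType} (f : R -> R) (mu sigma : R) (x : R) : R :=
  (sigma^-1 * f ((x - mu) / sigma))%R.

(* finite mixture g(x; Psi, sigma) = sum_j alpha_j f(x; mu_j, sigma),
   the mixing distribution Psi = sum_j alpha_j I(mu_j <= .) being given by
   its weights alpha and support points mu *)
Definition gmix {R : realType} (m : nat) (f : R -> R)
  (alpha mu : 'I_m -> R) (sigma : R) (x : R) : R :=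
  (\sum_(j < m) alpha j * fls f (mu j) sigma x)%R.

Definition in_Psi {R : realType} (m : nat) (alpha mu : 'I_m -> R) : Prop :=
  (forall j, 0 <= alpha j)%R /\ (\sum_(j < m) alpha j = 1)%R.

Definition is_density {R : realType} (f : R -> R) : Prop :=
  measurable_fun [set: R] f /\ (forall x, 0 <= f x)%R /\
  \int[lebesgue_measure]_x (f x)%:E = 1.

(* Condition (C3): f <= min(v0, v1 |x|^-beta); at x = 0 the second bound is +oo,
   so it is only imposed for x <> 0 (powR 0 (-beta) = 0 in mathcomp). *)
Definition C3 {R : realType} (f : R -> R) : Prop :=
  exists v0 v1 beta : R, (0 < v0)%R /\ (0 < v1)%R /\ (1 < beta)%R /\
    forall x, (f x <= v0)%R /\ (x != 0%R -> (f x <= v1 * powR `|x| (- beta))%R).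

From mathcomp Require Import all_boot all_order all_algebra.
From mathcomp Require Import all_classical all_reals all_analysis.
From mathcomp Require Import measurable_realfun ring lra.
Set Implicit Arguments. Unset Strict Implicit. Unset Printing Implicit Defensive.
Import Order.TTheory GRing.Theory Num.Theory.
Local Open Scope ring_scope.

(* Only the bound f <= v0 of (C3) is needed.  Split |log g| = log^+ g + log^- g.
   Since g <= v0 / sigma0, the part g log^+ g is bounded by a multiple of g.
   For the other part, log^- is antitone and log^-(a b) <= log^- a + log^- b,
   so g log^- g <= sum_j alpha_j f_j (log^- alpha_j + log^- f_j) with
   f_j = f(.; mu_j, sigma0).  An affine change of variables reduces
   int f_j log^- f_j to int f log^- f plus a multiple of int f, and
   int f log^- f < oo is the negative part of int (log f) f > -oo (take mu = 0). *)

Section negative_part_of_ln.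
Context {R : realType}.

Definition neg_ln (t : R) : R := Num.max 0 (- ln t).

Lemma neg_ln_ge0 t : 0 <= neg_ln t.
Proof. by rewrite le_max lexx. Qed.

Lemma oppr_ln_le_neg_ln t : - ln t <= neg_ln t.
Proof. by rewrite le_max lexx orbT. Qed.

Lemma measurable_neg_ln : measurable_fun [set: R] neg_ln.
Proof. by apply: measurable_maxr => //; apply: measurable_funN. Qed.

Lemma neg_lnV s : 0 < s -> neg_ln s^-1 = Num.max 0 (ln s).
Proof. by move=> s0; rewrite /neg_ln lnV ?posrE // opprK. Qed.

Lemma neg_lnM_le a b : 0 < a -> 0 < b -> neg_ln (a * b) <= neg_ln a + neg_ln b.
Proof.
move=> a0 b0; rewrite {1}/neg_ln ge_max addr_ge0 ?neg_ln_ge0 //= lnM ?posrE //.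
by have := oppr_ln_le_neg_ln a; have := oppr_ln_le_neg_ln b; lra.
Qed.

Lemma le_neg_ln s t : 0 < s -> s <= t -> neg_ln t <= neg_ln s.
Proof.
move=> s0 st; rewrite {1}/neg_ln ge_max neg_ln_ge0 /=.
have : ln s <= ln t by rewrite ler_ln ?posrE // (lt_le_trans s0).
by have := oppr_ln_le_neg_ln s; lra.
Qed.

Lemma abs_ln_le V t : 0 < t -> t <= V -> `|ln t| <= Num.max 0 (ln V) + neg_ln t.
Proof.
move=> t0 tV; have : ln t <= ln V by rewrite ler_ln ?posrE // (lt_le_trans t0).
have : ln V <= Num.max 0 (ln V) by rewrite le_max lexx orbT.
have : 0 <= Num.max 0 (ln V) by rewrite le_max lexx.
have := neg_ln_ge0 t; have := oppr_ln_le_neg_ln t.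
by rewrite ler_norml => *; apply/andP; split; lra.
Qed.

Lemma convex_comb_abs_ln_le m (alpha h : 'I_m -> R) V :
  (forall k, 0 <= alpha k) -> \sum_(k < m) alpha k = 1 ->
  (forall k, 0 <= h k) -> (forall k, h k <= V) ->
  `|ln (\sum_(k < m) alpha k * h k)| * (\sum_(k < m) alpha k * h k) <=
    \sum_(k < m) alpha k * (h k * (Num.max 0 (ln V) + neg_ln (alpha k) + neg_ln (h k))).
Proof.
move=> a0 a1 h0 hV; set G := \sum_(k < m) _; set c := Num.max 0 (ln V).
have c0 : 0 <= c by rewrite le_max lexx.
have G0 : 0 <= G by apply: sumr_ge0 => k _; apply: mulr_ge0.
have GV : G <= V.
  rewrite -[V]mul1r -a1 mulr_suml; apply: ler_sum => k _; exact: ler_wpM2l.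
have rhs_ge0 k : 0 <= alpha k * (h k * (c + neg_ln (alpha k) + neg_ln (h k))).
  by rewrite !mulr_ge0 // !addr_ge0 // neg_ln_ge0.
have [->|Gne0] := eqVneq G 0; first by rewrite mulr0 sumr_ge0.
have Gp : 0 < G by rewrite lt_def Gne0 G0.
apply: (le_trans (ler_wpM2r G0 (abs_ln_le Gp GV))).
rewrite /G mulr_sumr; apply: ler_sum => k _.
rewrite [X in _ <= X]mulrA [X in _ <= X]mulrC -addrA.
have [->|ahne0] := eqVneq (alpha k * h k) 0; first by rewrite !mulr0.
have ap : 0 < alpha k by rewrite lt_def a0 andbT; apply: contraNneq ahne0 => ->; rewrite mul0r.
have hp : 0 < h k by rewrite lt_def h0 andbT; apply: contraNneq ahne0 => ->; rewrite mulr0.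
rewrite ler_wpM2r ?mulr_ge0 // lerD2l.
apply: le_trans (neg_lnM_le ap hp); apply: le_neg_ln; first exact: mulr_gt0.
by rewrite /G (bigD1 k) //= lerDl sumr_ge0 // => j _; apply: mulr_ge0.
Qed.

Lemma scaled_neg_ln_le s t K : 0 < s -> 0 <= t ->
  s^-1 * t * (K + neg_ln (s^-1 * t)) <=
  s^-1 * (t * (K + Num.max 0 (ln s) + neg_ln t)).
Proof.
move=> s0 t0; have [->|tne0] := eqVneq t 0; first by rewrite !(mulr0, mul0r).
have tp : 0 < t by rewrite lt_def tne0 t0.
rewrite -mulrA ler_pM2l ?invr_gt0 // ler_pM2l // -addrA lerD2l -neg_lnV //.
by apply: neg_lnM_le; rewrite ?invr_gt0.
Qed.

End negative_part_of_ln.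

Section lebesgue_affine_change.
Local Open Scope ereal_scope.
Context {R : realType}.

Lemma ge0_integral_affine (s c : R) (h : R -> \bar R) : (0 < s)%R ->
  measurable_fun [set: R] h -> (forall x, 0 <= h x) ->
  \int[lebesgue_measure]_x h ((x - c) / s)%R = s%:E * \int[lebesgue_measure]_x h x.
Proof.
move=> s0 mh h0.
pose phi : measurableTypeR R -> measurableTypeR R := fun x => ((x - c) / s)%R.
have mphi : measurable_fun setT phi.
  by apply: measurable_funM => //; apply: measurable_funD.
have si : (0 <= s^-1)%R by rewrite invr_ge0 ltW.
pose nu := mscale (NngNum si)
  (measure_function_pushforward__canonical__measure_function_Measure lebesgue_measure mphi).
(* nu is Lebesgue measure: phi maps ](s a + c), (s b + c)] onto ]a, b] *)
have nuE A : measurable A -> lebesgue_measure A = nu A.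
  apply: lebesgue_measure_unique => _ [[a b] _ <-].
  rewrite /nu /= /mscale /= /pushforward.
  have -> : (phi @^-1` `]a, b])%classic = `](s * a + c)%R, (s * b + c)%R]%classic.
    apply/seteqP; split => x /=; rewrite !in_itv /= /phi.
      by rewrite ltr_pdivlMr // ler_pdivrMr // => /andP[? ?]; apply/andP; split; lra.
    by move=> /andP[? ?]; rewrite ltr_pdivlMr // ler_pdivrMr //; apply/andP; split; lra.
  rewrite !lebesgue_measure_itv /= !lte_fin.
  have [ab|ba] := ltP a b.
    rewrite ifT; last by rewrite ltrD2r ltr_pM2l.
    by rewrite -!EFinB -EFinM; congr (_%:E); field; lra.
  by rewrite ifF ?mule0 //; apply/negbTE; rewrite -leNgt lerD2r ler_pM2l.
rewrite [in RHS](eq_measure_integral nu); last by move=> A mA _; exact: nuE.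
rewrite ge0_integral_mscale // ge0_integral_pushforward //=.
by rewrite muleA -EFinM mulfV ?gt_eqF // mul1e.
Qed.

End lebesgue_affine_change.

Section neg_ln_integrals.
Local Open Scope ereal_scope.
Context {R : realType}.
Variable f : R -> R.
Hypotheses (mf : measurable_fun [set: R] f) (f0 : forall x, (0 <= f x)%R).
Hypothesis int_f : \int[lebesgue_measure]_x (f x)%:E < +oo.

Lemma measurable_fls c s : measurable_fun [set: R] (fls f c s).
Proof.
apply: measurable_funM => //; apply: measurableT_comp => //.
by apply: measurable_funM => //; apply: measurable_funD.
Qed.

Lemma fls_ge0 c s x : (0 < s)%R -> (0 <= fls f c s x)%R.
Proof. by move=> s0; rewrite /fls mulr_ge0 // invr_ge0 ltW. Qed.

Lemma integral_neg_ln_lty :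
  -oo < \int[lebesgue_measure]_x (elog (f x) * (f x)%:E) ->
  \int[lebesgue_measure]_x (f x * neg_ln (f x))%:E < +oo.
Proof.
move=> int_gtNy.
have neg_part x : (fun x => elog (f x) * (f x)%:E)^\- x = (f x * neg_ln (f x))%:E.
  rewrite funenegE /elog /neg_ln; have [fp|fle0] := ltP 0%R (f x); last first.
    have -> : f x = 0%R by apply: le_anti; rewrite fle0 f0.
    by rewrite mule0 oppe0 mul0r maxxx.
  by rewrite -EFinM -EFinN -EFin_max maxr_pMr ?ltW // mulr0 maxC mulrN mulrC.
rewrite ltNge leye_eq; apply/negP => /eqP int_negy.
move: int_gtNy; rewrite integralE.
by under [X in _ - X]eq_integral do rewrite neg_part; rewrite int_negy addeNy ltxx.
Qed.

Hypothesis int_f_neg_ln : \int[lebesgue_measure]_x (f x * neg_ln (f x))%:E < +oo.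

Lemma integral_neg_ln_shift_lty (K : R) : (0 <= K)%R ->
  \int[lebesgue_measure]_x (f x * (K + neg_ln (f x)))%:E < +oo.
Proof.
move=> K0.
have mfE : measurable_fun [set: R] (fun x => (f x)%:E) by apply/measurable_EFinP.
have mfneg : measurable_fun [set: R] (fun x => (f x * neg_ln (f x))%:E).
  apply/measurable_EFinP; apply: measurable_funM => //.
  exact: measurableT_comp measurable_neg_ln _.
under eq_integral do rewrite mulrDr EFinD (mulrC _ K) EFinM.
rewrite ge0_integralD //; first 1 last.
- by move=> x _; rewrite -EFinM lee_fin mulr_ge0.
- by apply: emeasurable_funM => //; exact: measurable_cst.
- by move=> x _; rewrite lee_fin mulr_ge0 ?neg_ln_ge0.
rewrite ge0_integralZl ?lee_fin // => [|x _]; last by rewrite lee_fin.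
by rewrite lte_add_pinfty // lte_mul_pinfty.
Qed.

Lemma integral_fls_neg_ln_lty c s (K : R) : (0 < s)%R -> (0 <= K)%R ->
  \int[lebesgue_measure]_x (fls f c s x * (K + neg_ln (fls f c s x)))%:E < +oo.
Proof.
move=> s0 K0; have si : (0 <= s^-1)%R by rewrite invr_ge0 ltW.
pose H y := (s^-1 * f y * (K + neg_ln (s^-1 * f y)))%R.
have mH : measurable_fun [set: R] (fun y => (H y)%:E).
  apply/measurable_EFinP; apply: measurable_funM; first exact: measurable_funM.
  apply: measurable_funD => //; apply: measurableT_comp measurable_neg_ln _.
  exact: measurable_funM.
have H0 y : 0 <= (H y)%:E by rewrite lee_fin !mulr_ge0 ?addr_ge0 ?neg_ln_ge0.
have -> : \int[lebesgue_measure]_x (fls f c s x * (K + neg_ln (fls f c s x)))%:E =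
    s%:E * \int[lebesgue_measure]_y (H y)%:E by rewrite -(ge0_integral_affine c s0 mH H0).
rewrite lte_mul_pinfty ?lee_fin ?ltW //.
have K'0 : (0 <= K + Num.max 0 (ln s))%R by rewrite addr_ge0 // le_max lexx.
have mF : measurable_fun [set: R]
    (fun y => (f y * (K + Num.max 0 (ln s) + neg_ln (f y)))%:E).
  apply/measurable_EFinP; apply: measurable_funM => //.
  by apply: measurable_funD => //; apply: measurableT_comp measurable_neg_ln _.
apply: (@le_lt_trans _ _
  (\int[lebesgue_measure]_y ((s^-1)%:E * (f y * (K + Num.max 0 (ln s) + neg_ln (f y)))%:E))).
  apply: ge0_le_integral => //; first exact: emeasurable_funM.
  by move=> y _; rewrite -EFinM lee_fin; exact: scaled_neg_ln_le.
rewrite ge0_integralZl ?lee_fin //; last first.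
  by move=> y _; rewrite lee_fin mulr_ge0 // addr_ge0 ?neg_ln_ge0.
by rewrite lte_mul_pinfty ?lee_fin // integral_neg_ln_shift_lty.
Qed.

Lemma gmix_ge0 m (alpha mu : 'I_m -> R) s x : (forall k, 0 <= alpha k)%R ->
  (0 < s)%R -> (0 <= gmix f alpha mu s x)%R.
Proof. by move=> a0 s0; apply: sumr_ge0 => k _; rewrite mulr_ge0 ?fls_ge0. Qed.

Lemma measurable_gmix m (alpha mu : 'I_m -> R) s :
  measurable_fun [set: R] (gmix f alpha mu s).
Proof.
by apply: measurable_sum => k; apply: measurable_funM => //; exact: measurable_fls.
Qed.

Variable v0 : R.
Hypothesis f_le : forall x, (f x <= v0)%R.

Lemma integral_gmix_abs_ln_lty m (alpha mu : 'I_m -> R) s :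
  in_Psi alpha mu -> (0 < s)%R ->
  \int[lebesgue_measure]_x (`|ln (gmix f alpha mu s x)| * gmix f alpha mu s x)%:E < +oo.
Proof.
move=> [a0 a1] s0; pose c := Num.max 0%R (ln (s^-1 * v0)).
pose B k x := (fls f (mu k) s x * (c + neg_ln (alpha k) + neg_ln (fls f (mu k) s x)))%R.
have mB k : measurable_fun [set: R] (B k).
  apply: measurable_funM; first exact: measurable_fls.
  by apply: measurable_funD => //; apply: measurableT_comp measurable_neg_ln _;
    exact: measurable_fls.
have B0 k x : (0 <= B k x)%R.
  by rewrite mulr_ge0 ?fls_ge0 // !addr_ge0 ?neg_ln_ge0 // le_max lexx.
apply: (@le_lt_trans _ _ (\int[lebesgue_measure]_x (\sum_(k < m) alpha k * B k x)%:E)).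
  apply: ge0_le_integral => //.
  - by move=> x _; rewrite lee_fin mulr_ge0 ?gmix_ge0.
  - apply/measurable_EFinP; apply: measurable_funM; last exact: measurable_gmix.
    by do 2 apply: measurableT_comp => //; exact: measurable_gmix.
  - by apply/measurable_EFinP; apply: measurable_sum => k; apply: measurable_funM => //; exact: mB.
  move=> x _; rewrite lee_fin; apply: convex_comb_abs_ln_le => // k.
    exact: fls_ge0.
  by rewrite /fls ler_pM2l ?invr_gt0 // f_le.
under eq_integral do rewrite -sumEFin.
rewrite ge0_integral_sum //; last first.
- by move=> k x _; rewrite lee_fin mulr_ge0.
- by move=> k; apply/measurable_EFinP; apply: measurable_funM => //; exact: mB.
apply: lte_sum_pinfty => k _; under eq_integral do rewrite EFinM.
rewrite ge0_integralZl ?lee_fin //; last 2 first.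
- by apply/measurable_EFinP; exact: mB.
- by move=> x _; rewrite lee_fin.
rewrite lte_mul_pinfty ?lee_fin // integral_fls_neg_ln_lty //.
by rewrite addr_ge0 ?neg_ln_ge0 // le_max lexx.
Qed.

End neg_ln_integrals.

Lemma fls01 {R : realType} (f : R -> R) : fls f 0 1 = f.
Proof. by apply/funext => x; rewrite /fls subr0 divr1 invr1 mul1r. Qed.

Lemma abse_elogM {R : realType} (t : R) : (0 <= t)%R ->
  (`|elog t| * t%:E = (`|ln t| * t)%:E)%E.
Proof.
rewrite le_eqVlt => /predU1P[<-|t0]; first by rewrite !(mule0, mulr0).
by rewrite /elog t0 -EFinM.
Qed.

Local Open Scope ereal_scope.

Theorem proposition1 (R : realType) (m : nat) (f : R -> R) :
  (0 < m)%N ->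
  is_density f ->
  C3 f ->
  (forall mu : R,
     -oo < \int[lebesgue_measure]_x (elog (fls f mu 1 x) * (f x)%:E)) ->
  forall (alpha mu : 'I_m -> R) (sigma0 : R),
    in_Psi alpha mu -> (0 < sigma0)%R ->
    \int[lebesgue_measure]_x
       (`| elog (gmix f alpha mu sigma0 x) | * (gmix f alpha mu sigma0 x)%:E)
      < +oo.
Proof.
move=> _ [mf [f0 int_f1]] [v0 [v1 [beta [_ [_ [_ C3f]]]]]] int_log alpha mu sigma0 Psi s0.
have int_f : \int[lebesgue_measure]_x (f x)%:E < +oo by rewrite int_f1 ltry.
have := int_log 0%R; rewrite fls01 => /(integral_neg_ln_lty f0) int_neg_ln.
have a0 : forall k, (0 <= alpha k)%R by case: Psi.
under eq_integral do rewrite abse_elogM ?gmix_ge0 //.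
apply: integral_gmix_abs_ln_lty => // x; exact: (C3f x).1.
Qed.
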